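(* Let $(X,A,\prec)$ be an alignment of the family $\{(X_a,\prec_a)\}_{a\in I}$, let $\mathfrak{P}=\{I_1,\dots,I_p\}$ be a partition of $I$ and $X_k=\dot\bigcup_{a\in I_k}X_a$. For each $k$ let $Z_k$ be the set of nonempty sets $Q\cap X_k$, $Q\in\mathcal{C}(X,A)$ (the columns of $(X,A)[X_k]$), strictly partially ordered by $P\cap X_k\prec_k Q\cap X_k$ iff $P\prec Q$. Let $(X,A)/\mathfrak{P}$ be the graph whose vertex set is $\dot\bigcup_k Z_k$ (elements of $Z_k$ written $(k,Q\cap X_k)$) and whose edges are the pairs $\{(k,Q\cap X_k),(l,Q\cap X_l)\}$ with $k\neq l$, $Q\in\mathcal{C}(X,A)$ and both $Q\cap X_k$, $Q\cap X_l$ nonempty. Its connected components are exactly the sets $Q/\mathfrak{P}=\{(k,Q\cap X_k): Q\cap X_k\neq\emptyset\}$, $Q\in\mathcal{C}(X,A)$, in bijection with $\mathcal{C}(X,A)$; order them by $P/\mathfrak{P}\prec' Q/\mathfrak{P}$ iff $P\prec Q$. Then $((X,A)/\mathfrak{P},\prec')$ is an alignment of the family of posets $\{(Z_k,\prec_k)\}_{k=1}^p$.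
   Context: Let $I$ be a finite index set (''rows''), and for each $a\in I$ let $(X_a,\prec_a)$ be a finite set with a strict partial order. Elements of $X_a$ are written $(a,i)$, and $X=\dot\bigcup_{a\in I}X_a$. For a simple undirected graph $(X,A)$, $\mathcal{C}(X,A)$ denotes its set of connected components (''columns''). An alignment of a family of finite strict posets $(X_a,\prec_a)$ is a triple $(X,A,\prec)$ where $\prec$ is a strict partial order on $\mathcal{C}(X,A)$ such that: (P1) every $Q\in\mathcal{C}(X,A)$ induces a complete subgraph of $(X,A)$; (P2) if $(a,i)\in Q$ and $(a,j)\in Q$ then $i=j$; (P3) if $(a,i)\in P$, $(a,j)\in Q$ and $(a,i)\prec_a(a,j)$ then $P\prec Q$; (P4) if $P\prec Q$, $(a,i)\in P$ and $(a,j)\in Q$, then $(a,i)\prec_a(a,j)$ or $(a,i)$ and $(a,j)$ are incomparable w.r.t. $\prec_a$. *)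

From HB Require Import structures.
From mathcomp Require Import all_boot.
Set Implicit Arguments. Unset Strict Implicit. Unset Printing Implicit Defensive.

(* A family of finite strict posets (X_a, <_a), a in I, is encoded by a single
   finite type T (the disjoint union X), a row map r : T -> I (x lies in X_(r x)),
   and a relation po : rel T relating only elements of the same row. *)
Definition strict_family (I T : finType) (r : T -> I) (po : rel T) : Prop :=
  [/\ (forall x, ~~ po x x),
      (forall x y z, po x y -> po y z -> po x z) &
      (forall x y, po x y -> r x = r y)].

Definition columns (T : finType) (e : rel T) : {set {set T}} :=
  [set [set y | connect e x y] | x : T].

(* (T, e, lt) is an alignment of the family (r, po); lt is a relation on sets of
   vertices, only meaningful on columns. *)
Definition alignment (I T : finType) (r : T -> I) (po e : rel T)
    (lt : rel {set T}) : Prop :=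
  symmetric e /\ irreflexive e /\
  (forall P, P \in columns e -> ~~ lt P P) /\
  (forall P Q R, P \in columns e -> Q \in columns e -> R \in columns e ->
     lt P Q -> lt Q R -> lt P R) /\
  (forall Q, Q \in columns e -> forall x y, x \in Q -> y \in Q -> x != y -> e x y) /\
  (forall Q, Q \in columns e -> forall x y, x \in Q -> y \in Q -> r x = r y -> x = y) /\
  (forall P Q, P \in columns e -> Q \in columns e -> forall x y,
     x \in P -> y \in Q -> r x = r y -> po x y -> lt P Q) /\
  (forall P Q, P \in columns e -> Q \in columns e -> lt P Q -> forall x y,
     x \in P -> y \in Q -> r x = r y -> po x y || ~~ po y x).

(* The partition {I_1,...,I_p} of I is given by blk : I -> 'I_p (I_k = blk^-1 k). *)

Definition Xk (I T : finType) (r : T -> I) (p : nat) (blk : I -> 'I_p) (k : 'I_p)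
  : {set T} := [set x | blk (r x) == k].

Definition zpred (I T : finType) (r : T -> I) (e : rel T) (p : nat) (blk : I -> 'I_p)
  (z : 'I_p * {set T}) : bool :=
  [exists Q in columns e, (z.2 == Q :&: Xk r blk z.1) && (z.2 != set0)].

Definition Zq (I T : finType) (r : T -> I) (e : rel T) (p : nat) (blk : I -> 'I_p)
  : finType := {z : 'I_p * {set T} | zpred r e blk z}.

Section Quot.
Variables (I T : finType) (r : T -> I) (e : rel T) (lt : rel {set T})
          (p : nat) (blk : I -> 'I_p).

Local Notation Z := (Zq r e blk).

Definition zrow (z : Z) : 'I_p := (val z).1.

Definition zord : rel Z := fun z w =>
  (zrow z == zrow w) &&
  [exists P in columns e, exists Q in columns e,
     [&& (val z).2 == P :&: Xk r blk (zrow z),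
         (val w).2 == Q :&: Xk r blk (zrow w) & lt P Q]].

Definition zedge : rel Z := fun z w =>
  (zrow z != zrow w) &&
  [exists Q in columns e,
     ((val z).2 == Q :&: Xk r blk (zrow z)) && ((val w).2 == Q :&: Xk r blk (zrow w))].

Definition qcol (Q : {set T}) : {set Z} :=
  [set z : Z | (val z).2 == Q :&: Xk r blk (zrow z)].

Definition zlt : rel {set Z} := fun C D =>
  [exists P in columns e, exists Q in columns e,
     [&& C == qcol P, D == qcol Q & lt P Q]].

End Quot.

Arguments zrow {I T} r e {p} blk z.
Arguments zord {I T} r e lt {p} blk _ _.
Arguments zedge {I T} r e {p} blk _ _.
Arguments zlt {I T} r e lt {p} blk _ _.

From Pilot Require Import Defs.
From HB Require Import structures.
From mathcomp Require Import all_boot.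

Set Implicit Arguments.
Unset Strict Implicit.
Unset Printing Implicit Defensive.

(* Every vertex (k, Q :&: X_k) of the quotient determines its column Q, since
   the nonempty set Q :&: X_k meets no other column.  So the vertices of Q/P are
   pairwise joined by edges and no edge leaves Q/P, making the sets Q/P the
   columns; and a vertex of P/P precedes one of Q/P exactly when they lie in the
   same block and P < Q, from which the alignment axioms follow. *)

Section Columns.
Variables (T : finType) (e : rel T).
Hypothesis e_sym : symmetric e.

Lemma columns_mem_eq P x :
  P \in columns e -> x \in P -> P = [set y | connect e x y].
Proof.
case/imsetP=> a _ -> /[!inE] ax; apply/setP=> y; rewrite !inE.
by rewrite (same_connect (sym_connect_sym e_sym) ax).
Qed.

Lemma columns_eq P Q x :
  P \in columns e -> Q \in columns e -> x \in P -> x \in Q -> P = Q.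
Proof. by move=> hP hQ xP xQ; rewrite (columns_mem_eq hP xP) (columns_mem_eq hQ xQ). Qed.

Lemma columns_n0 P : P \in columns e -> exists x, x \in P.
Proof. by case/imsetP=> a _ ->; exists a; rewrite inE connect0. Qed.

End Columns.

Section Quotient.
Variables (I T : finType) (r : T -> I) (e : rel T) (lt : rel {set T})
          (p : nat) (blk : I -> 'I_p).
Hypothesis e_sym : symmetric e.

Local Notation Z := (Zq r e blk).
Local Notation zrow := (zrow r e blk).
Local Notation qcol := (qcol r e blk).
Local Notation zedge := (zedge r e blk).
Local Notation zord := (zord r e lt blk).

Lemma Zq_qcol (z : Z) : exists2 Q, Q \in columns e & z \in qcol Q.
Proof. by case/existsP: (valP z) => Q /andP[hQ /andP[zQ _]]; exists Q; rewrite ?inE. Qed.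

Lemma qcol_uniq (z : Z) P Q :
  P \in columns e -> Q \in columns e -> z \in qcol P -> z \in qcol Q -> P = Q.
Proof.
move=> hP hQ /[!inE] /eqP zP /eqP zQ.
case/existsP: (valP z) => _ /andP[_ /andP[_ /set0Pn[x]]].
move=> xz; have := xz; rewrite zQ !inE => /andP[xQ _].
by move: xz; rewrite zP !inE => /andP[xP _]; apply: columns_eq xP xQ.
Qed.

Lemma qcol_row_inj (z w : Z) Q :
  z \in qcol Q -> w \in qcol Q -> zrow z = zrow w -> z = w.
Proof.
move=> /[!inE] /eqP zQ /eqP wQ row_zw; apply: val_inj.
rewrite [val z]surjective_pairing [val w]surjective_pairing zQ wQ.
by rewrite /Defs.zrow in row_zw *; rewrite row_zw.
Qed.

Lemma qcol_n0 Q : Q \in columns e -> exists z : Z, z \in qcol Q.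
Proof.
move=> hQ; have [x xQ] := columns_n0 hQ.
have zP : zpred r e blk (blk (r x), Q :&: Xk r blk (blk (r x))).
  apply/existsP; exists Q; rewrite hQ eqxx /=.
  by apply/set0Pn; exists x; rewrite !inE xQ eqxx.
by exists (Sub _ zP); rewrite inE.
Qed.

Lemma qcol_inj : {in columns e &, injective qcol}.
Proof.
move=> P Q hP hQ PQ; have [z zP] := qcol_n0 hP.
by apply: (qcol_uniq hP hQ zP); rewrite -PQ.
Qed.

Lemma zedge_sym : symmetric zedge.
Proof.
move=> z w; rewrite /Defs.zedge eq_sym; congr (_ && _).
by apply/existsP/existsP=> -[Q /and3P[hQ zQ wQ]]; exists Q; rewrite hQ zQ wQ.
Qed.

Lemma zedge_qcol (z w : Z) Q : Q \in columns e -> z \in qcol Q ->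
  zedge z w = (zrow z != zrow w) && (w \in qcol Q).
Proof.
move=> hQ zQ; rewrite /Defs.zedge; case: (zrow z != zrow w) => //=.
apply/existsP/idP=> [[Q' /and3P[hQ' zQ' wQ']] | wQ].
  by rewrite (qcol_uniq hQ hQ' zQ) ?inE.
by move: zQ wQ; rewrite !inE => zQ wQ; exists Q; rewrite hQ zQ wQ.
Qed.

Lemma zord_qcol (z w : Z) P Q : P \in columns e -> Q \in columns e ->
  z \in qcol P -> w \in qcol Q -> zord z w = (zrow z == zrow w) && lt P Q.
Proof.
move=> hP hQ zP wQ; rewrite /Defs.zord; case: (zrow z == zrow w) => //=.
apply/existsP/idP=> [[P' /andP[hP' /existsP[Q' /andP[hQ' /and3P[zP' wQ' ltPQ]]]]] | ltPQ].
  by rewrite (qcol_uniq hP hP' zP) ?(qcol_uniq hQ hQ' wQ) ?inE.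
move: zP wQ; rewrite !inE => zP wQ.
by exists P; rewrite hP; apply/existsP; exists Q; rewrite hQ zP wQ.
Qed.

Lemma zcomponent_qcol (z : Z) Q : Q \in columns e -> z \in qcol Q ->
  [set w | connect zedge z w] = qcol Q.
Proof.
move=> hQ zQ; apply/setP=> w; rewrite inE; apply/idP/idP => [|wQ].
  have qcol_closed : closed zedge (qcol Q).
    apply: (intro_closed (sym_connect_sym zedge_sym)) => u v uv uQ.
    by move: uv; rewrite (zedge_qcol _ hQ uQ) => /andP[].
  by move/(closed_connect qcol_closed) <-.
have [row_zw | row_zw] := eqVneq (zrow z) (zrow w).
  by rewrite (qcol_row_inj zQ wQ row_zw) connect0.
by apply: connect1; rewrite (zedge_qcol _ hQ zQ) row_zw.
Qed.

Lemma columns_zedge : columns zedge = [set qcol Q | Q in columns e].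
Proof.
apply/setP=> C; apply/imsetP/imsetP => [[z _ ->] | [Q hQ ->]].
  have [Q hQ zQ] := Zq_qcol z.
  by exists Q; rewrite // (zcomponent_qcol hQ zQ).
have [z zQ] := qcol_n0 hQ.
by exists z; rewrite // (zcomponent_qcol hQ zQ).
Qed.

Lemma zlt_qcol P Q : P \in columns e -> Q \in columns e ->
  zlt r e lt blk (qcol P) (qcol Q) = lt P Q.
Proof.
move=> hP hQ; apply/existsP/idP =>
  [[P' /andP[hP' /existsP[Q' /andP[hQ' /and3P[/eqP PP' /eqP QQ' ltPQ]]]]] | ltPQ].
  by rewrite (qcol_inj hP hP' PP') (qcol_inj hQ hQ' QQ').
by exists P; rewrite hP; apply/existsP; exists Q; rewrite hQ !eqxx.
Qed.

Hypothesis lt_irr : forall P, P \in columns e -> ~~ lt P P.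
Hypothesis lt_trans : forall P Q R, P \in columns e -> Q \in columns e ->
  R \in columns e -> lt P Q -> lt Q R -> lt P R.

Lemma strict_family_zord : strict_family zrow zord.
Proof.
split=> [z | x y z | x y]; last by case/andP=> /eqP.
  by have [Q hQ zQ] := Zq_qcol z; rewrite (zord_qcol hQ hQ zQ zQ) eqxx lt_irr.
have [P hP xP] := Zq_qcol x; have [Q hQ yQ] := Zq_qcol y; have [R hR zR] := Zq_qcol z.
rewrite (zord_qcol hP hQ xP yQ) (zord_qcol hQ hR yQ zR) (zord_qcol hP hR xP zR).
by case/andP=> /eqP -> ltPQ /andP[-> ltQR]; apply: lt_trans ltPQ ltQR.
Qed.

Lemma alignment_quotient : alignment zrow zord zedge (zlt r e lt blk).
Proof.
rewrite /alignment columns_zedge.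
split; first exact: zedge_sym.
split; first by move=> z; rewrite /Defs.zedge eqxx.
split; first by move=> _ /imsetP[P hP ->]; rewrite zlt_qcol ?lt_irr.
split.
  move=> _ _ _ /imsetP[P hP ->] /imsetP[Q hQ ->] /imsetP[R hR ->].
  by rewrite !zlt_qcol //; apply: lt_trans.
split.
  move=> _ /imsetP[Q hQ ->] z w zQ wQ; apply: contra_neqT => row_zw.
  rewrite (zedge_qcol _ hQ zQ) wQ andbT negbK in row_zw.
  exact: qcol_row_inj zQ wQ (eqP row_zw).
split; first by move=> _ /imsetP[Q hQ ->] z w; apply: qcol_row_inj.
split.
  move=> _ _ /imsetP[P hP ->] /imsetP[Q hQ ->] z w zP wQ _.
  by rewrite zlt_qcol // (zord_qcol hP hQ zP wQ) => /andP[].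
move=> _ _ /imsetP[P hP ->] /imsetP[Q hQ ->]; rewrite zlt_qcol // => ltPQ z w zP wQ row_zw.
by rewrite (zord_qcol hP hQ zP wQ) row_zw eqxx ltPQ.
Qed.

End Quotient.

Theorem lemma5 (I T : finType) (r : T -> I) (po e : rel T) (lt : rel {set T})
    (p : nat) (blk : I -> 'I_p) :
  strict_family r po ->
  alignment r po e lt ->
  (forall k : 'I_p, exists a : I, blk a = k) ->
  [/\ columns (zedge r e blk) = [set qcol r e blk Q | Q in columns e],
      {in columns e &, injective (qcol r e blk)},
      strict_family (zrow r e blk) (zord r e lt blk) &
      alignment (zrow r e blk) (zord r e lt blk) (zedge r e blk) (zlt r e lt blk)].
Proof.
(* The quotient edges and orders are defined through the columns of (X, A), so
   only the symmetry of A and the order axioms of < are needed. *)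
move=> _ [e_sym [_ [lt_irr [lt_trans _]]]] _.
split; first exact: columns_zedge.
- exact: qcol_inj.
- exact: strict_family_zord.
- exact: alignment_quotient.
Qed.
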